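(* For each $\beta>0$ there exists a radial weight $\nu\in\widehat{\mathcal{D}}$ such that $\nu_{[\beta]}\notin\widehat{\mathcal{D}}$, where $\nu_{[\beta]}(z)=\nu(z)(1-|z|)^\beta$.
   Context: A radial weight is a non-negative $\omega\in L^1([0,1))$, extended to the unit disc by $\omega(z)=\omega(|z|)$, with $\widehat{\omega}(r)=\int_r^1\omega(s)\,ds>0$ for all $0\le r<1$. A radial weight $\nu$ belongs to $\widehat{\mathcal{D}}$ if there is $C\ge1$ with $\widehat{\nu}(r)\le C\,\widehat{\nu}\big(\frac{1+r}{2}\big)$ for all $0\le r<1$. *)

From Stdlib Require Import Reals Lra.
Open Scope R_scope.

(* [has_tail w r L]: the (improper Riemann) integral \int_r^1 w(s) ds exists
   and equals L, i.e. w is Riemann integrable on every [r,b] with b<1 and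
   \int_r^b w -> L as b -> 1^-.  For nonnegative w this is the Lebesgue
   integral over [r,1). *)
Definition has_tail (w : R -> R) (r L : R) : Prop :=
  (forall b, r <= b < 1 -> exists _ : Riemann_integrable w r b, True) /\
  (forall eps, 0 < eps -> exists delta, 0 < delta /\
     forall b (pr : Riemann_integrable w r b),
       r <= b -> 1 - delta < b < 1 -> Rabs (RiemannInt pr - L) < eps).

Definition radial_weight (w : R -> R) : Prop :=
  (forall s, 0 <= s < 1 -> 0 <= w s) /\
  (forall r, 0 <= r < 1 -> exists L, has_tail w r L /\ 0 < L).

Definition Dhat (w : R -> R) : Prop :=
  radial_weight w /\
  exists C, 1 <= C /\
    forall r L1 L2, 0 <= r < 1 ->
      has_tail w r L1 -> has_tail w ((1 + r) / 2) L2 -> L1 <= C * L2.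

Definition weight_beta (nu : R -> R) (beta : R) : R -> R :=
  fun s => nu s * Rpower (1 - s) beta.

From Stdlib Require Import Reals Lra Lia ClassicalEpsilon.
From Coquelicot Require Import Coquelicot.
Open Scope R_scope.

(* Partition [0,1) by the points p j = 1 - e^{-j} and let nu be
   the step function giving the cell [p j, p (j+1)) the mass
   e^{-⌈√j⌉} - e^{-⌈√(j+1)⌉}; this mass is e^{-q}(1 - e^{-1}) on the cells
   j = q² and 0 on all others.  The tail of nu from p m is e^{-⌈√m⌉}, and
   (1+r)/2 lies at most two cells beyond the cell of r, so nu is in \hat D.
   For nu_beta = nu (1-s)^beta the mass of the cell n² is squeezed towards
   its right end: at r_n = 1 - 2e^{-(n²+1)}, whose midpoint with 1 is exactly
   p(n²+1), the tail is at least e^{-n-1-beta(n²+1)}, whereas beyond p(n²+1)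
   all mass sits past p((n+1)²), giving a tail at most e^{-n-1-beta(n+1)²}.
   The ratio e^{2 beta n} is unbounded, so nu_beta is not in \hat D. *)

Lemma exp_le_exp x y : x <= y -> exp x <= exp y.
Proof. intros [h | ->]; [left; apply exp_increasing | right]; auto. Qed.

(* e > 2, i.e. exp(-1) < 1/2: the ratio of consecutive gaps of the partition. *)
Lemma exp_m1_lt_half : exp (-1) < / 2.
Proof.
  assert (He : 1 + 1 < exp 1) by (apply exp_ineq1; lra).
  assert (Hinv : exp 1 * exp (-1) = 1).
  { rewrite <- exp_plus, Rplus_opp_r; apply exp_0. }
  pose proof (exp_pos (-1)); nra.
Qed.

Definition loc_integrable (w : R -> R) : Prop :=
  forall a b, 0 <= a -> a <= b -> b < 1 -> ex_RInt w a b.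

Definition nonneg_on01 (w : R -> R) : Prop :=
  forall s, 0 <= s < 1 -> 0 <= w s.

Lemma RInt_split (w : R -> R) a c b :
  ex_RInt w a c -> ex_RInt w c b -> RInt w a b = RInt w a c + RInt w c b :> R.
Proof. intros H1 H2. rewrite <- (RInt_Chasles w a c b H1 H2). reflexivity. Qed.

Section Tails.

Variable w : R -> R.
Hypothesis w_int : loc_integrable w.
Hypothesis w_nonneg : nonneg_on01 w.

Lemma RInt_mono_interval a c d b :
  0 <= a -> a <= c -> c <= d -> d <= b -> b < 1 -> RInt w c d <= RInt w a b.
Proof.
  intros Ha Hac Hcd Hdb Hb.
  assert (Hpos : forall x y, a <= x -> x <= y -> y <= b -> 0 <= RInt w x y).
  { intros x y Hx Hxy Hy. apply RInt_ge_0; [lra | apply w_int; lra |].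
    intros t Ht; apply w_nonneg; lra. }
  rewrite (RInt_split w a c b), (RInt_split w c d b) by (apply w_int; lra).
  pose proof (Hpos a c); pose proof (Hpos d b); lra.
Qed.

Lemma has_tail_near_one r L eps b0 :
  0 <= r < 1 -> has_tail w r L -> 0 < eps -> b0 < 1 ->
  exists b, r <= b /\ b0 <= b /\ b < 1 /\ Rabs (RInt w r b - L) < eps.
Proof.
  intros [Hr Hr1] [_ Ht] Heps Hb0.
  destruct (Ht eps Heps) as [d [Hd Happrox]].
  set (b := Rmax (Rmax r b0) (1 - d / 2)).
  assert (Hrb : Rmax r b0 <= b) by apply Rmax_l.
  assert (Hdb : 1 - d / 2 <= b) by apply Rmax_r.
  assert (Hb1 : b < 1) by (unfold b; repeat apply Rmax_lub_lt; lra).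
  pose proof (Rmax_l r b0); pose proof (Rmax_r r b0).
  exists b; repeat split; try lra.
  pose (pr := ex_RInt_Reals_0 w r b (w_int r b Hr ltac:(lra) Hb1)).
  rewrite (RInt_Reals w r b pr). apply Happrox; lra.
Qed.

Lemma tail_ge_partial r L a b :
  0 <= r -> has_tail w r L -> r <= a -> a <= b -> b < 1 -> RInt w a b <= L.
Proof.
  intros Hr HL Hra Hab Hb. apply Rnot_lt_le; intros Hlt.
  destruct (has_tail_near_one r L (RInt w a b - L) b ltac:(lra) HL ltac:(lra) Hb)
    as [b' [Hrb' [Hbb' [Hb' Happrox]]]].
  pose proof (RInt_mono_interval r a b b' Hr Hra Hab Hbb' Hb').
  apply Rabs_def2 in Happrox; lra.
Qed.

Lemma tail_le_bound r L B :
  0 <= r < 1 -> has_tail w r L -> (forall b, r <= b < 1 -> RInt w r b <= B) -> L <= B.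
Proof.
  intros Hr HL HB. apply Rnot_lt_le; intros Hlt.
  destruct (has_tail_near_one r L (L - B) r Hr HL ltac:(lra) ltac:(lra))
    as [b [Hrb [_ [Hb Happrox]]]].
  specialize (HB b (conj Hrb Hb)). apply Rabs_def2 in Happrox; lra.
Qed.

(* Bounded partial integrals make the tail exist: it is their supremum. *)
Lemma tail_exists r B :
  0 <= r < 1 -> (forall b, r <= b < 1 -> RInt w r b <= B) -> exists L, has_tail w r L.
Proof.
  intros Hr HB.
  set (E := fun x => exists b, r <= b < 1 /\ x = RInt w r b).
  assert (Hbd : bound E) by (exists B; intros x [b [Hb ->]]; apply HB; auto).
  assert (Hne : exists x, E x) by (exists (RInt w r r), r; split; [lra | auto]).
  destruct (completeness E Hbd Hne) as [L [Hub Hleast]].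
  exists L; split.
  - intros b Hb. exists (ex_RInt_Reals_0 w r b (w_int r b ltac:(lra) ltac:(lra) ltac:(lra))).
    exact I.
  - intros eps Heps.
    assert (Hclose : exists b0, r <= b0 < 1 /\ L - eps < RInt w r b0).
    { apply NNPP; intros Hnone. assert (L <= L - eps) by
        (apply Hleast; intros x [b [Hb ->]]; apply Rnot_lt_le; intros Hlt;
         apply Hnone; exists b; auto).
      lra. }
    destruct Hclose as [b0 [Hb0 Hlt]]. exists (1 - b0); split; [lra |].
    intros b pr Hrb Hb. rewrite <- (RInt_Reals w r b pr).
    assert (RInt w r b <= L) by (apply Hub; exists b; split; [lra | auto]).
    pose proof (RInt_mono_interval r r b0 b ltac:(lra) ltac:(lra) ltac:(lra) ltac:(lra) ltac:(lra)).
    apply Rabs_def1; lra.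
Qed.

Lemma radial_weight_intro B :
  (forall a b, 0 <= a -> a <= b -> b < 1 -> RInt w a b <= B) ->
  (forall r L, 0 <= r < 1 -> has_tail w r L -> 0 < L) ->
  radial_weight w.
Proof.
  intros HB Hpos. split; [exact w_nonneg |].
  intros r Hr. destruct (tail_exists r B Hr) as [L HL].
  { intros b Hb; apply HB; lra. }
  exists L; split; [exact HL | exact (Hpos r L Hr HL)].
Qed.

End Tails.

Lemma RInt_le_scaled (w v : R -> R) c a b :
  a <= b -> ex_RInt w a b -> ex_RInt v a b ->
  (forall s, a < s < b -> w s <= c * v s) -> RInt w a b <= c * RInt v a b.
Proof.
  intros Hab Hw Hv Hle.
  assert (Hscal : RInt (fun s => c * v s) a b = c * RInt v a b :> R)
    by exact (RInt_scal v a b c Hv).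
  rewrite <- Hscal. apply RInt_le; auto. exact (ex_RInt_scal v a b c Hv).
Qed.

Definition p (j : nat) : R := 1 - exp (- INR j).

(* 1 - e^{-1}: the relative length of each cell of the partition. *)
Definition gap_ratio : R := 1 - exp (-1).

Lemma gap_ratio_gt_half : / 2 < gap_ratio.
Proof. unfold gap_ratio; pose proof exp_m1_lt_half; lra. Qed.

Lemma p_0 : p 0 = 0.
Proof. unfold p; simpl; rewrite Ropp_0, exp_0; ring. Qed.

Lemma p_lt_1 j : p j < 1.
Proof. unfold p; pose proof (exp_pos (- INR j)); lra. Qed.

Lemma p_le j k : (j <= k)%nat -> p j <= p k.
Proof.
  intros Hjk; unfold p. apply le_INR in Hjk.
  assert (exp (- INR k) <= exp (- INR j)) by (apply exp_le_exp; lra); lra.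
Qed.

Lemma p_nonneg j : 0 <= p j.
Proof. rewrite <- p_0; apply p_le; lia. Qed.

Lemma p_gap j : p (S j) - p j = exp (- INR j) * gap_ratio.
Proof.
  unfold p, gap_ratio; rewrite S_INR.
  replace (- (INR j + 1)) with (- INR j + -1) by ring; rewrite exp_plus; ring.
Qed.

Lemma p_gap_pos j : 0 < p (S j) - p j.
Proof. rewrite p_gap; pose proof gap_ratio_gt_half; pose proof (exp_pos (- INR j)); nra. Qed.

Lemma exists_p_gt b : b < 1 -> exists N, b < p N.
Proof.
  intros Hb. destruct (INR_unbounded (- ln (1 - b))) as [N HN]. exists N. unfold p.
  assert (exp (- INR N) < 1 - b).
  { rewrite <- (exp_ln (1 - b)) by lra. apply exp_increasing; lra. }
  lra.
Qed.

Lemma cell_exists s : 0 <= s < 1 -> exists j, p j <= s < p (S j).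
Proof.
  intros Hs. destruct (exists_p_gt s (proj2 Hs)) as [N HN].
  induction N as [| N IH]; [rewrite p_0 in HN; lra |].
  destruct (Rlt_or_le s (p N)) as [Hlt | Hge]; [exact (IH Hlt) | exists N; auto].
Qed.

Definition cell (s : R) : nat :=
  epsilon (inhabits 0%nat) (fun j => p j <= s < p (S j)).

Lemma cell_spec s : 0 <= s < 1 -> p (cell s) <= s < p (S (cell s)).
Proof. intros Hs. unfold cell. apply epsilon_spec, cell_exists, Hs. Qed.

Lemma cell_bounds s a b : p a <= s < p b -> (a <= cell s < b)%nat.
Proof.
  intros Hs.
  assert (Hs01 : 0 <= s < 1) by (pose proof (p_nonneg a); pose proof (p_lt_1 b); lra).
  destruct (cell_spec s Hs01) as [Hlo Hhi].
  split.
  - apply Nat.nlt_ge; intros Hlt. pose proof (p_le (S (cell s)) a Hlt); lra.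
  - apply Nat.nle_gt; intros Hle. pose proof (p_le b (cell s) Hle); lra.
Qed.

Lemma cell_eq s j : p j <= s < p (S j) -> cell s = j.
Proof. intros Hs; pose proof (cell_bounds s j (S j) Hs); lia. Qed.

Lemma loc_integrable_cells (w : R -> R) (g : nat -> R -> R) :
  (forall j, ex_RInt (g j) (p j) (p (S j))) ->
  (forall j s, p j < s < p (S j) -> w s = g j s) ->
  loc_integrable w.
Proof.
  intros Hg Hw.
  assert (Hinit : forall N, ex_RInt w 0 (p N)).
  { induction N as [| N IH]; [rewrite p_0; apply ex_RInt_point |].
    apply ex_RInt_Chasles with (p N); [exact IH |].
    apply ex_RInt_ext with (g N); [| apply Hg].
    intros x Hx. rewrite Rmin_left, Rmax_right in Hx by (apply p_le; lia).
    symmetry; apply Hw; exact Hx. }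
  intros a b Ha Hab Hb. destruct (exists_p_gt b Hb) as [N HN].
  apply (ex_RInt_Chasles_2 w 0 a b); [lra |].
  apply (ex_RInt_Chasles_1 w 0 b (p N)); [lra | apply Hinit].
Qed.

(* The midpoint between a point of a cell and 1 lies before the end of the
   next cell; this is where the ratio e > 2 enters. *)
Lemma midpoint_before_next_cell r j : r < p (S j) -> (1 + r) / 2 < p (S (S j)).
Proof.
  intros Hr. unfold p in *. rewrite (S_INR (S j)).
  replace (- (INR (S j) + 1)) with (- INR (S j) + -1) by ring. rewrite exp_plus.
  pose proof exp_m1_lt_half; pose proof (exp_pos (- INR (S j))); nra.
Qed.

(* The masses telescope, so that
   \int_{p m}^{p N} nu = e^{-⌈√m⌉} - e^{-⌈√N⌉}; they vanish except on the
   cells j = q², which carry e^{-q}(1 - e^{-1}). *)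
Definition mass (j : nat) : R :=
  exp (- INR (Nat.sqrt_up j)) - exp (- INR (Nat.sqrt_up (S j))).

Definition height (j : nat) : R := mass j / (p (S j) - p j).

Definition nu (s : R) : R := height (cell s).

Lemma mass_nonneg j : 0 <= mass j.
Proof.
  unfold mass. assert (Hmono : (Nat.sqrt_up j <= Nat.sqrt_up (S j))%nat)
    by (apply Nat.sqrt_up_le_mono; lia).
  apply le_INR in Hmono. assert (exp (- INR (Nat.sqrt_up (S j))) <=
    exp (- INR (Nat.sqrt_up j))) by (apply exp_le_exp; lra). lra.
Qed.

Lemma height_nonneg j : 0 <= height j.
Proof.
  unfold height. apply Rmult_le_pos; [apply mass_nonneg |].
  left; apply Rinv_0_lt_compat, p_gap_pos.
Qed.

Lemma mass_square q : mass (q * q) = exp (- INR q) * gap_ratio.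
Proof.
  unfold mass, gap_ratio. rewrite Nat.sqrt_up_square, Nat.sqrt_up_succ_square by lia.
  rewrite S_INR. replace (- (INR q + 1)) with (- INR q + -1) by ring.
  rewrite exp_plus; ring.
Qed.

Lemma height_square q : height (q * q) = exp (INR (q * q) - INR q).
Proof.
  unfold height. rewrite mass_square, p_gap.
  set (x := INR (q * q)); set (y := INR q).
  replace (x - y) with (- y - - x) by ring. rewrite Rminus_def, exp_plus, (exp_Ropp (- x)).
  pose proof gap_ratio_gt_half; pose proof (exp_pos (- x)).
  field; split; lra.
Qed.

Lemma mass_between_squares n j :
  (n * n < j)%nat -> (S j <= S n * S n)%nat -> mass j = 0.
Proof.
  intros Hlo Hhi.
  assert (Hup : forall k, (n * n < k)%nat -> (k <= S n * S n)%nat -> Nat.sqrt_up k = S n).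
  { intros k Hk1 Hk2.
    apply Nat.sqrt_up_lt_square in Hk1; [| lia | lia].
    apply Nat.sqrt_up_le_square in Hk2; [| lia | lia]. lia. }
  unfold mass; rewrite (Hup j), (Hup (S j)) by lia; ring.
Qed.

Lemma nu_on_cell j s : p j <= s < p (S j) -> nu s = height j.
Proof. intros Hs; unfold nu; rewrite (cell_eq s j Hs); reflexivity. Qed.

Lemma nu_nonneg : nonneg_on01 nu.
Proof. intros s _; apply height_nonneg. Qed.

Lemma nu_loc_integrable : loc_integrable nu.
Proof.
  apply loc_integrable_cells with (g := fun j _ => height j).
  - intros j; apply ex_RInt_const.
  - intros j s Hs; apply nu_on_cell; lra.
Qed.

Lemma RInt_nu_cell j : RInt nu (p j) (p (S j)) = mass j :> R.
Proof.
  rewrite (RInt_ext nu (fun _ => height j)).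
  - rewrite RInt_const. unfold height, scal; simpl; unfold mult; simpl.
    pose proof (p_gap_pos j); field; lra.
  - intros x Hx. rewrite Rmin_left, Rmax_right in Hx by (apply p_le; lia).
    apply nu_on_cell; lra.
Qed.

Lemma RInt_nu_telescope m N : (m <= N)%nat ->
  RInt nu (p m) (p N) = exp (- INR (Nat.sqrt_up m)) - exp (- INR (Nat.sqrt_up N)) :> R.
Proof.
  induction 1 as [| N Hle IH]; [rewrite RInt_point; unfold zero; simpl; ring |].
  rewrite (RInt_split nu (p m) (p N) (p (S N))), IH, RInt_nu_cell
    by (apply nu_loc_integrable; [apply p_nonneg | apply p_le | apply p_lt_1]; lia).
  unfold mass; ring.
Qed.

Lemma nu_partial_upper m a b :
  p m <= a -> a <= b -> b < 1 -> RInt nu a b <= exp (- INR (Nat.sqrt_up m)).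
Proof.
  intros Ha Hab Hb. destruct (exists_p_gt b Hb) as [N HN].
  assert (HmN : (m <= N)%nat).
  { apply Nat.nlt_ge; intros HNm. pose proof (p_le N m ltac:(lia)); lra. }
  pose proof (RInt_mono_interval nu nu_loc_integrable nu_nonneg (p m) a b (p N)
    (p_nonneg m) Ha Hab ltac:(lra) (p_lt_1 N)).
  rewrite RInt_nu_telescope in H by exact HmN.
  pose proof (exp_pos (- INR (Nat.sqrt_up N))); lra.
Qed.

Lemma nu_tail_upper m r L :
  p m <= r < 1 -> has_tail nu r L -> L <= exp (- INR (Nat.sqrt_up m)).
Proof.
  intros Hr HL. apply (tail_le_bound nu nu_loc_integrable r L); auto.
  - pose proof (p_nonneg m); lra.
  - intros b Hb; apply nu_partial_upper; lra.
Qed.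

(* Lower bound for tails starting before p m: the next square cell alone
   carries e^{-⌈√m⌉}(1 - e^{-1}). *)
Lemma nu_tail_lower m r L :
  0 <= r <= p m -> has_tail nu r L -> exp (- INR (Nat.sqrt_up m)) * gap_ratio <= L.
Proof.
  intros Hr HL. set (q := Nat.sqrt_up m).
  assert (Hmq : (m <= q * q)%nat) by (apply Nat.sqrt_up_le_square; lia).
  assert (Hcells : RInt nu (p m) (p (S (q * q))) = exp (- INR q) * gap_ratio :> R).
  { rewrite RInt_nu_telescope, Nat.sqrt_up_succ_square by lia.
    fold q. rewrite S_INR, <- mass_square. unfold mass.
    rewrite Nat.sqrt_up_square, Nat.sqrt_up_succ_square, S_INR by lia; ring. }
  rewrite <- Hcells.
  apply (tail_ge_partial nu nu_loc_integrable nu_nonneg r L);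
    [lra | exact HL | lra | apply p_le; lia | apply p_lt_1].
Qed.

Lemma nu_radial : radial_weight nu.
Proof.
  apply (radial_weight_intro nu nu_loc_integrable nu_nonneg 1).
  - intros a b Ha Hab Hb. replace 1 with (exp (- INR (Nat.sqrt_up 0))).
    + apply nu_partial_upper; rewrite ?p_0; lra.
    + simpl; rewrite Ropp_0; apply exp_0.
  - intros r L Hr HL. destruct (exists_p_gt r (proj2 Hr)) as [N HN].
    pose proof (nu_tail_lower N r L ltac:(lra) HL).
    pose proof gap_ratio_gt_half; pose proof (exp_pos (- INR (Nat.sqrt_up N))); nra.
Qed.

(* Two extra decay steps cost at most the constant 18 = 2·9 > e²/(1-e^{-1}). *)
Lemma exp_two_steps x : exp (- x) <= 18 * (exp (- (x + 2)) * gap_ratio).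
Proof.
  replace (- x) with (- (x + 2) + (1 + 1)) by ring.
  rewrite !exp_plus. pose proof exp_le_3; pose proof gap_ratio_gt_half.
  pose proof (exp_pos (- (x + 2))); pose proof (exp_pos 1).
  assert (exp 1 * exp 1 <= 9) by nra. nra.
Qed.

(* nu belongs to \hat D with constant 18: the tail at r is at most e^{-a}
   and the tail at (1+r)/2 at least e^{-(a+2)}(1 - e^{-1}), a = ⌈√(cell r)⌉. *)
Lemma Dhat_nu : Dhat nu.
Proof.
  split; [exact nu_radial |]. exists 18; split; [lra |].
  intros r L1 L2 Hr H1 H2.
  destruct (cell_spec r Hr) as [Hri Hri'].
  set (i := cell r) in *. set (a := Nat.sqrt_up i).
  pose proof (midpoint_before_next_cell r i Hri') as Hmid.
  assert (Hsq : (Nat.sqrt_up (S (S i)) <= a + 2)%nat).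
  { assert (i <= a * a)%nat by (apply Nat.sqrt_up_le_square; lia).
    apply Nat.sqrt_up_le_square; lia. }
  apply le_INR in Hsq. rewrite plus_INR in Hsq.
  replace (INR 2) with 2 in Hsq by (simpl; ring).
  pose proof (nu_tail_upper i r L1 ltac:(lra) H1) as Hup.
  pose proof (nu_tail_lower (S (S i)) ((1 + r) / 2) L2 ltac:(lra) H2) as Hlow.
  assert (exp (- (INR a + 2)) <= exp (- INR (Nat.sqrt_up (S (S i)))))
    by (apply exp_le_exp; lra).
  pose proof (exp_two_steps (INR a)); pose proof gap_ratio_gt_half.
  fold a in Hup. nra.
Qed.

Section Weighted.

Variable beta : R.
Hypothesis beta_pos : 0 < beta.

Local Notation nu_beta := (weight_beta nu beta).

Lemma rpower_beyond k s : p k <= s < 1 -> Rpower (1 - s) beta <= exp (- (beta * INR k)).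
Proof.
  intros Hs. unfold Rpower. apply exp_le_exp.
  assert (Hln : ln (1 - s) <= - INR k).
  { rewrite <- (ln_exp (- INR k)). apply ln_le; [lra |]. unfold p in Hs; lra. }
  nra.
Qed.

Lemma nu_beta_nonneg : nonneg_on01 nu_beta.
Proof.
  intros s Hs. unfold weight_beta. apply Rmult_le_pos; [apply nu_nonneg, Hs |].
  left; apply exp_pos.
Qed.

Lemma nu_beta_loc_integrable : loc_integrable nu_beta.
Proof.
  apply loc_integrable_cells with (g := fun j s => height j * Rpower (1 - s) beta).
  - intros j. apply (@ex_RInt_continuous R_CompleteNormedModule). intros z Hz.
    rewrite Rmin_left, Rmax_right in Hz by (apply p_le; lia).
    pose proof (p_lt_1 (S j)).
    apply (@ex_derive_continuous R_AbsRing R_NormedModule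
      (fun s => height j * Rpower (1 - s) beta)).
    unfold Rpower. auto_derive. lra.
  - intros j s Hs. unfold weight_beta. rewrite (nu_on_cell j s) by lra. reflexivity.
Qed.

Lemma nu_beta_le_scaled_nu k s : p k <= s < 1 -> nu_beta s <= exp (- (beta * INR k)) * nu s.
Proof.
  intros Hs. unfold weight_beta. rewrite Rmult_comm.
  apply Rmult_le_compat_r; [apply nu_nonneg; pose proof (p_nonneg k); lra |].
  apply rpower_beyond, Hs.
Qed.

Lemma RInt_nu_beta_cell_lower j a b :
  p j <= a -> a <= b -> b <= p (S j) ->
  (b - a) * (height j * Rpower (1 - b) beta) <= RInt nu_beta a b.
Proof.
  intros Ha Hab Hb. pose proof (p_lt_1 (S j)); pose proof (p_nonneg j).
  set (c := height j * Rpower (1 - b) beta).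
  assert (Hconst : RInt (fun _ => c) a b = (b - a) * c :> R)
    by (rewrite RInt_const; reflexivity).
  rewrite <- Hconst.
  apply RInt_le; [lra | apply ex_RInt_const | apply nu_beta_loc_integrable; lra |].
  intros x Hx. unfold weight_beta, c. rewrite (nu_on_cell j x) by lra.
  apply Rmult_le_compat_l; [apply height_nonneg |]. apply Rle_Rpower_l; lra.
Qed.

Lemma nu_beta_radial : radial_weight nu_beta.
Proof.
  apply (radial_weight_intro nu_beta nu_beta_loc_integrable nu_beta_nonneg 1).
  - intros a b Ha Hab Hb.
    assert (Hle : RInt nu_beta a b <= exp (- (beta * INR 0)) * RInt nu a b).
    { apply RInt_le_scaled; [lra | apply nu_beta_loc_integrable; lra |
        apply nu_loc_integrable; lra |].
      intros s Hs; apply nu_beta_le_scaled_nu; rewrite p_0; lra. }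
    pose proof (nu_partial_upper 0 a b ltac:(rewrite p_0; lra) Hab Hb).
    simpl in *; rewrite Rmult_0_r, Ropp_0, exp_0 in *. lra.
  - intros r L Hr HL. destruct (exists_p_gt r (proj2 Hr)) as [N HN].
    set (j := (N * N)%nat).
    assert (Hj : p N <= p j) by (apply p_le; unfold j; nia).
    pose proof (p_le j (S j) ltac:(lia)); pose proof (p_lt_1 (S j)).
    pose proof (tail_ge_partial nu_beta nu_beta_loc_integrable nu_beta_nonneg r L
      (p j) (p (S j)) ltac:(lra) HL ltac:(lra) ltac:(lra) ltac:(lra)).
    pose proof (RInt_nu_beta_cell_lower j (p j) (p (S j)) ltac:(lra) ltac:(lra) ltac:(lra)).
    assert (0 < (p (S j) - p j) * (height j * Rpower (1 - p (S j)) beta)).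
    { apply Rmult_lt_0_compat; [apply p_gap_pos |].
      unfold j; rewrite height_square; unfold Rpower.
      apply Rmult_lt_0_compat; apply exp_pos. }
    lra.
Qed.

(* After the cell n², nu lives only beyond p((n+1)²), where (1-s)^beta is
   at most e^{-beta (n+1)²}. *)
Lemma nu_beta_after_square n s :
  p (S (n * n)) <= s < 1 -> nu_beta s <= exp (- (beta * INR (S n * S n))) * nu s.
Proof.
  intros Hs. destruct (Rlt_or_le s (p (S n * S n))) as [Hgap | Hbeyond].
  - assert (Hcell := cell_bounds s (S (n * n)) (S n * S n) (conj (proj1 Hs) Hgap)).
    assert (Hnu0 : nu s = 0).
    { unfold nu, height. rewrite (mass_between_squares n (cell s)) by lia.
      unfold Rdiv; ring. }
    unfold weight_beta; rewrite Hnu0; lra.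
  - apply nu_beta_le_scaled_nu; lra.
Qed.

Lemma nu_beta_tail_after_square n L :
  has_tail nu_beta (p (S (n * n))) L ->
  L <= exp (- (beta * INR (S n * S n))) * exp (- INR (S n)).
Proof.
  intros HL. pose proof (p_nonneg (S (n * n))); pose proof (p_lt_1 (S (n * n))).
  apply (tail_le_bound nu_beta nu_beta_loc_integrable (p (S (n * n))) L); [lra | exact HL |].
  intros b Hb.
  apply Rle_trans with (exp (- (beta * INR (S n * S n))) * RInt nu (p (S (n * n))) b).
  - apply RInt_le_scaled; [lra | apply nu_beta_loc_integrable; lra |
      apply nu_loc_integrable; lra |].
    intros s Hs; apply nu_beta_after_square; lra.
  - apply Rmult_le_compat_l; [left; apply exp_pos |].
    rewrite <- (Nat.sqrt_up_succ_square n) by lia.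
    apply nu_partial_upper; lra.
Qed.

(* Just before p(n²+1), at r = 1 - 2e^{-(n²+1)}, the cell n² alone gives
   a tail of size e^{-(n²+1)} · e^{n²-n} · e^{-beta (n²+1)}. *)
Lemma nu_beta_tail_before_square n r L :
  r = 1 - 2 * exp (- INR (S (n * n))) -> has_tail nu_beta r L ->
  exp (- (1 + INR n + beta * INR (S (n * n)))) <= L.
Proof.
  intros Hr HL. set (i := (n * n)%nat) in *. set (E := exp (- INR (S i))) in *.
  assert (HE : E = exp (- INR i) * exp (-1)).
  { unfold E; rewrite S_INR, <- exp_plus; f_equal; ring. }
  assert (HpSi : p (S i) = 1 - E) by reflexivity.
  assert (HEpos : 0 < E) by apply exp_pos.
  pose proof exp_m1_lt_half; pose proof (exp_pos (- INR i)); pose proof (exp_pos (-1)).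
  assert (Hpi : p i <= r) by (unfold p; rewrite Hr, HE; nra).
  pose proof (p_nonneg i).
  pose proof (tail_ge_partial nu_beta nu_beta_loc_integrable nu_beta_nonneg r L r (p (S i))
    ltac:(lra) HL ltac:(lra) ltac:(lra) (p_lt_1 _)) as Htail.
  pose proof (RInt_nu_beta_cell_lower i r (p (S i)) Hpi ltac:(lra) ltac:(lra)) as Hcell.
  replace (p (S i) - r) with E in Hcell by lra.
  replace (1 - p (S i)) with E in Hcell by lra.
  unfold i in Hcell; rewrite height_square in Hcell; fold i in Hcell.
  unfold Rpower, E in Hcell; rewrite ln_exp, <- !exp_plus in Hcell.
  replace (- (1 + INR n + beta * INR (S i)))
    with (- INR (S i) + (INR i - INR n + beta * - INR (S i))) by (rewrite S_INR; ring).
  lra.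
Qed.

(* nu_beta is not in \hat D: at r_n = 1 - 2e^{-(n²+1)} the ratio of the tails
   at r_n and (1+r_n)/2 = p(n²+1) is at least e^{2 beta n}. *)
Lemma nu_beta_not_Dhat : ~ Dhat nu_beta.
Proof.
  intros [Hrad [C [HC1 HC]]].
  destruct (INR_unbounded (ln C / (2 * beta))) as [n Hn].
  assert (HCn : C < exp (2 * beta * INR n)).
  { rewrite <- (exp_ln C) by lra. apply exp_increasing.
    apply Rmult_lt_compat_l with (r := 2 * beta) in Hn; [| lra].
    field_simplify in Hn; lra. }
  set (r := 1 - 2 * exp (- INR (S (n * n)))).
  assert (Hmid : (1 + r) / 2 = p (S (n * n))) by (unfold r, p; field).
  assert (Hr : 0 <= r < 1).
  { pose proof (exp_pos (- INR (S (n * n)))).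
    assert (exp (- INR (S (n * n))) <= exp (-1))
      by (apply exp_le_exp; rewrite S_INR; pose proof (pos_INR (n * n)); lra).
    pose proof exp_m1_lt_half; unfold r; lra. }
  destruct (proj2 Hrad r Hr) as [L1 [H1 _]].
  destruct (proj2 Hrad ((1 + r) / 2) ltac:(lra)) as [L2 [H2 _]].
  specialize (HC r L1 L2 Hr H1 H2). rewrite Hmid in H2.
  pose proof (nu_beta_tail_before_square n r L1 eq_refl H1) as Hlow.
  pose proof (nu_beta_tail_after_square n L2 H2) as Hup.
  set (U := exp (- (beta * INR (S n * S n))) * exp (- INR (S n))) in *.
  assert (HU : exp (- (1 + INR n + beta * INR (S (n * n)))) = exp (2 * beta * INR n) * U).
  { unfold U; rewrite <- !exp_plus; f_equal. rewrite !S_INR, !mult_INR, S_INR; ring. }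
  assert (HUpos : 0 < U) by (unfold U; apply Rmult_lt_0_compat; apply exp_pos).
  assert (exp (2 * beta * INR n) * U <= C * U) by nra.
  assert (exp (2 * beta * INR n) <= C) by (apply Rmult_le_reg_r with U; lra).
  lra.
Qed.

End Weighted.

Theorem proposition10 (beta : R) (hbeta : 0 < beta) :
  exists nu : R -> R,
    Dhat nu /\ radial_weight (weight_beta nu beta) /\ ~ Dhat (weight_beta nu beta).
Proof.
  exists nu. split; [exact Dhat_nu |].
  split; [exact (nu_beta_radial beta hbeta) | exact (nu_beta_not_Dhat beta hbeta)].
Qed.
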